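(* Let $q$ be a power of $2$, let $a,b\in\mathbb{F}_q$ with $b\ne0$, and let $n\ge2$ be an integer. Let $r\ge0$ be such that $2^r$ divides $n+1$ but $2^{r+1}$ does not, and let $m\ge 0$ be defined by $n+1=2^r(m+1)$. Assume $r\ge1$. Then $m$ is even. If $m>0$, then $\hat C_n(a,b)$ is LCD if and only if $$a/b\notin\{-1/b\}\cup\{-1/b+\theta^i+\theta^{-i} : 1\le i\le m/2\},$$ where $\theta\in\overline{\mathbb{F}}_q$ is a primitive $(m+1)$-th root of unity. If $m=0$, then $\hat C_n(a,b)$ is LCD if and only if $a\ne 1$.
   Context: For $a,b\in\mathbb{F}_q$ and $n\ge 2$, $\hat T_n(a,b)$ denotes the $n\times n$ symmetric tridiagonal Toeplitz matrix over $\mathbb{F}_q$ with all diagonal entries equal to $a$, all entries on the first super- and sub-diagonals equal to $b$, and all other entries $0$. $\hat C_n(a,b)$ is the $[2n,n]$ linear code over $\mathbb{F}_q$ with generator matrix $[I_n\mid \hat T_n(a,b)]$. A linear code $C$ is LCD if $C\cap C^\perp=\{0\}$ (Euclidean dual). *)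

From HB Require Import structures.
From mathcomp Require Import all_boot all_order all_algebra all_field.
Set Implicit Arguments. Unset Strict Implicit. Unset Printing Implicit Defensive.
Import GRing.Theory.
Local Open Scope ring_scope.

Definition tridiagT (R : nzRingType) (n : nat) (a b : R) : 'M[R]_n :=
  \matrix_(i < n, j < n)
    if i == j then a
    else if (i.+1 == j :> nat) || (j.+1 == i :> nat) then b else 0.

(* generator matrix [I_n | T_n(a,b)] of hat C_n(a,b) *)
Definition genC (R : nzRingType) (n : nat) (a b : R) : 'M[R]_(n, n + n) :=
  row_mx 1%:M (tridiagT n a b).

(* The linear code spanned by the rows of G is LCD (Euclidean):
   C ∩ C^⊥ = {0}, where v ∈ C^⊥ iff v is orthogonal to every row of G,
   i.e. v *m G^T = 0. *)
Definition is_LCD (F : fieldType) (k N : nat) (G : 'M[F]_(k, N)) : Prop :=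
  forall v : 'rV[F]_N, (v <= G)%MS -> v *m G^T = 0 -> v = 0.

From HB Require Import structures.
From mathcomp Require Import all_boot all_order all_algebra all_field.
From mathcomp Require Import ring zify.
Import GRing.Theory.
Local Open Scope ring_scope.

(* Proof outline (characteristic 2 throughout).
   1. Since the tridiagonal matrix T = T_n(a,b) is symmetric and T + T = 0,
      the Gram matrix of the generator [I | T] is I + T^2 = (I + T)^2 with
      I + T = T_n(a+1,b); so the code is LCD iff T_n(a+1,b) is nonsingular.
   2. A row vector u with u T_n(c,b) = 0 satisfies, after padding with zeros,
      the recurrence g_(j+2) = (c/b) g_(j+1) + g_j with g_0 = g_(n+1) = 0, so
      g_j = g_1 U_j(c/b) for the sequence U_0 = 0, U_1 = 1,
      U_(j+2) = z U_(j+1) + U_j.  Hence T_n(c,b) is singular iff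
      U_(n+1)(c/b) = 0.
   3. In characteristic 2, U_(2^r M)(z) = z^(2^r - 1) U_M(z)^(2^r) and
      U_(2k+1)(z) = (U_(k+1)(z) + U_k(z))^2.
   4. For a primitive (2k+1)-th root of unity theta, the k distinct values
      theta^i + theta^-i (1 <= i <= k) are roots of the degree-k polynomial
      U_(k+1) + U_k, hence are all of its roots. *)

(* The sequence U_j(z): U_0 = 0, U_1 = 1, U_(j+2) = z U_(j+1) + U_j, i.e. the
   Fibonacci polynomials evaluated at z (in characteristic 2 they play the
   role of the Chebyshev polynomials of the second kind). *)
Fixpoint chebU {R : nzRingType} (z : R) (j : nat) : R :=
  match j with
  | 0 => 0
  | 1 => 1
  | (j'.+1 as j1).+1 => z * chebU z j1 + chebU z j'
  end.

Lemma nat_ind2 (P : nat -> Prop) : P 0%N -> P 1%N ->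
  (forall j, P j -> P j.+1 -> P j.+2) -> forall j, P j.
Proof.
move=> P0 P1 PS j; suff: P j /\ P j.+1 by case.
by elim: j => [|j [IH1 IH2]]; split => //; apply: PS.
Qed.

Section ChebU.
Variable R : comNzRingType.
Implicit Types z : R.

Lemma chebU_add z j k :
  chebU z (j + k).+1 = chebU z j.+1 * chebU z k.+1 + chebU z j * chebU z k.
Proof.
elim: j k => [|j IH] k; first by rewrite add0n /= mul1r mul0r addr0.
by rewrite addSnnS IH; case: j IH => [|j] IH /=; ring.
Qed.

Lemma chebU_recurrence z (g : nat -> R) (K : nat) :
  g 0%N = 0 -> (forall j, (j.+2 <= K)%N -> g j.+2 = z * g j.+1 + g j) ->
  forall j, (j <= K)%N -> g j = g 1%N * chebU z j.
Proof.
move=> g0 rec; elim/nat_ind2 => [|| j IH1 IH2] jK; first by rewrite g0 mulr0.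
  by rewrite mulr1.
by rewrite rec // IH1 ?IH2 /=; [rewrite mulrDr mulrCA | lia | lia].
Qed.

Lemma chebU_rmorph (S : comNzRingType) (f : {rmorphism R -> S}) z j :
  f (chebU z j) = chebU (f z) j.
Proof.
elim/nat_ind2: j => [|| j IH1 IH2]; [exact: rmorph0 | exact: rmorph1 |].
by rewrite /= rmorphD rmorphM IH1 IH2.
Qed.

Lemma chebU_horner z j : (chebU 'X j).[z] = chebU z j.
Proof.
elim/nat_ind2: j => [|| j IH1 IH2]; [exact: hornerC | exact: hornerC |].
by rewrite /= hornerD hornerM hornerX IH1 IH2.
Qed.

Lemma size_chebU j : size (chebU ('X : {poly R}) j) = j.
Proof.
elim/nat_ind2: j => [|| j IH1 IH2]; [exact: size_poly0 | exact: size_poly1 |].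
have sizeXU : size ('X * chebU ('X : {poly R}) j.+1) = j.+2.
  by rewrite mulrC size_mulX ?IH2 // -size_poly_eq0 IH2.
by rewrite /= size_addl sizeXU // IH1.
Qed.

Hypothesis two0 : (2%:R : R) = 0.

Lemma chebU_double z k : chebU z k.*2 = z * chebU z k ^+ 2.
Proof.
case: k => [|k]; first by rewrite /= expr0n /= mulr0.
have -> : k.+1.*2 = (k + k.+1).+1 by rewrite doubleS -addnn addnS.
rewrite chebU_add [chebU z k.+2]/=.
have -> : forall x y : R, x * (z * x + y) + y * x = z * x ^+ 2 + 2%:R * (y * x).
  by move=> x y; ring.
by rewrite two0 mul0r addr0.
Qed.

Lemma chebU_odd z k : chebU z k.*2.+1 = (chebU z k.+1 + chebU z k) ^+ 2.
Proof.
rewrite -addnn chebU_add.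
have -> : forall x y : R, (x + y) ^+ 2 = x * x + y * y + 2%:R * (x * y).
  by move=> x y; ring.
by rewrite two0 mul0r addr0.
Qed.

Lemma chebU_pow2 z r M :
  chebU z (2 ^ r * M) = z ^+ (2 ^ r - 1) * chebU z M ^+ (2 ^ r).
Proof.
elim: r => [|r IH]; first by rewrite expn0 mul1n subnn expr0 mul1r expr1.
rewrite expnS -mulnA mul2n chebU_double IH exprMn -!exprM mulrA -exprS.
have -> : ((2 ^ r - 1) * 2).+1 = (2 * 2 ^ r - 1)%N.
  by have := expn_gt0 2 r; lia.
by rewrite mulnC.
Qed.

End ChebU.

Lemma chebU_pow2_neq0 (F : fieldType) (z : F) r M :
  (2%:R : F) = 0 -> (0 < r)%N ->
  (chebU z (2 ^ r * M) != 0) = (z != 0) && (chebU z M != 0).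
Proof.
move=> two0 r0; have e0 : (0 < 2 ^ r - 1)%N.
  have : (2 ^ 1 <= 2 ^ r)%N by rewrite leq_exp2l.
  lia.
by rewrite chebU_pow2 // mulf_eq0 !expf_eq0 e0 expn_gt0 negb_or.
Qed.

Section TridiagonalKernel.
Variables (F : fieldType) (n : nat).
Local Notation N := n.+1.

Definition padded (u : 'rV[F]_N) (k : nat) : F :=
  if k is i.+1 then (if (i < N)%N then u 0 (inord i) else 0) else 0.

Lemma padded_sum (u : 'rV[F]_N) (x : F) (k : nat) :
  \sum_(i < N) u 0 i * (if i.+1 == k then x else 0) = x * padded u k.
Proof.
case: k => [|k]; first by rewrite mulr0 big1 // => i _; rewrite mulr0.
rewrite /=; case: ltnP => [lt_kN | le_Nk].
- rewrite (bigD1 (Ordinal lt_kN)) //= eqxx big1 ?addr0 => [|i].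
    by rewrite mulrC; congr (_ * u 0 _); apply: val_inj; rewrite /= inordK.
  by rewrite eqSS -val_eqE /= => /negbTE ->; rewrite mulr0.
- rewrite mulr0 big1 // => i _; rewrite eqSS.
  by have /ltn_eqF -> := leq_trans (ltn_ord i) le_Nk; rewrite mulr0.
Qed.

(* The entries of T_N(c,b), written so that each term is a shifted delta. *)
Lemma tridiagT_entry (c b : F) (i j : 'I_N) :
  tridiagT N c b i j = (if i.+1 == j.+1 then c else 0)
    + (if i.+1 == j then b else 0) + (if i.+1 == j.+2 then b else 0).
Proof.
rewrite mxE -val_eqE /= !eqSS.
case: (ltngtP i j) => [lt|gt|->].
- have -> : (j.+1 == i :> nat) = false by lia.
  have -> : (i == j.+1 :> nat) = false by lia.
  by rewrite orbF add0r addr0.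
- have -> : (i.+1 == j :> nat) = false by lia.
  by rewrite add0r add0r [(i : nat) == j.+1]eq_sym.
- have -> : (j.+1 == j) = false by lia.
  have -> : (j == j.+1 :> nat) = false by lia.
  by rewrite !addr0.
Qed.

Lemma mul_tridiagT_entry (c b : F) (u : 'rV[F]_N) (j : 'I_N) :
  (u *m tridiagT N c b) 0 j = b * padded u j + c * padded u j.+1 + b * padded u j.+2.
Proof.
rewrite mxE; under eq_bigr => i _ do rewrite tridiagT_entry !mulrDr.
by rewrite !big_split /= !padded_sum [c * _ + _]addrC.
Qed.

Hypothesis two0 : (2%:R : F) = 0.
Variables (c b : F).
Hypothesis b0 : b != 0.

Lemma tridiag_eq_recurrence (x y w : F) :
  (b * x + c * y + b * w == 0) = (w == c / b * y + x).
Proof.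
apply/eqP/eqP => [E | ->]; last first.
  have -> : b * x + c * y + b * (c / b * y + x) = 2%:R * (b * x + c * y) by field.
  by rewrite two0 mul0r.
have -> : w = (c / b * y + x) + (b * x + c * y + b * w) / b
                - 2%:R * (c / b * y + x) by field.
by rewrite E two0 !mul0r subr0 addr0.
Qed.

Lemma tridiagT_singular :
  (exists2 u : 'rV[F]_N, u != 0 & u *m tridiagT N c b = 0) <->
  chebU (c / b) N.+1 = 0.
Proof.
split=> [[u u_neq0 uT0] | U0].
  have g_chebU := @chebU_recurrence F (c / b) (padded u) N.+1 erefl.
  have {g_chebU} g_chebU : forall j, (j <= N.+1)%N -> padded u j = padded u 1 * chebU (c / b) j.
    apply: g_chebU => j jN; apply/eqP; rewrite -tridiag_eq_recurrence.
    by rewrite -(mul_tridiagT_entry _ _ _ (Ordinal (jN : (j < N)%N))) uT0 mxE.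
  apply/eqP; apply: contraNT u_neq0 => U_neq0; apply/eqP/rowP => i; rewrite mxE.
  have g1 : padded u 1 = 0.
    have := g_chebU N.+1 (leqnn _); rewrite /= ltnn => /esym/eqP.
    by rewrite mulf_eq0 (negbTE U_neq0) orbF => /eqP.
  by move: (g_chebU i.+1); rewrite g1 mul0r /= ltn_ord inord_val; apply; exact: leqW.
exists (\row_(i < N) chebU (c / b) i.+1).
  by apply/eqP => /rowP /(_ ord0); rewrite !mxE; apply/eqP; rewrite oner_eq0.
have padded_chebU j : (j <= N.+1)%N ->
    padded (\row_(i < N) chebU (c / b) i.+1) j = chebU (c / b) j.
  case: j => [|j] //= jN; case: ltnP => [jlt | jge]; first by rewrite mxE inordK.
  by have -> : j = N by lia.
apply/rowP => j; have jN := ltn_ord j.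
rewrite mul_tridiagT_entry !padded_chebU ?mxE; try lia.
by apply/eqP; rewrite tridiag_eq_recurrence.
Qed.

End TridiagonalKernel.

Section LCDCriterion.
Variables (F : fieldType) (n : nat).
Hypothesis two0 : (2%:R : F) = 0.

Lemma tridiagT_tr (a b : F) : (tridiagT n a b)^T = tridiagT n a b.
Proof.
apply/matrixP => i j; rewrite !mxE [j == i]eq_sym orbC.
by rewrite [(j.+1 == i)%N]eq_sym [(i.+1 == j)%N]eq_sym.
Qed.

Lemma tridiagT_add1 (a b : F) : 1%:M + tridiagT n a b = tridiagT n (a + 1) b.
Proof.
apply/matrixP => i j; rewrite !mxE; case: eqP => _ /=; first by rewrite addrC.
by rewrite add0r.
Qed.

(* The Gram matrix of [I | T] is I + T^2 = (I + T)^2 in characteristic 2. *)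
Lemma genC_gram (a b : F) :
  genC n a b *m (genC n a b)^T = tridiagT n (a + 1) b *m tridiagT n (a + 1) b.
Proof.
rewrite /genC tr_row_mx mul_row_col trmx1 tridiagT_tr mul1mx -tridiagT_add1.
rewrite mulmxDl !mulmxDr !mul1mx mulmx1.
set T := tridiagT n a b; rewrite -addrA [T + (T + _)]addrA.
have -> : T + T = 0.
  by apply/matrixP => i j; rewrite !mxE -mulr2n -mulr_natr two0 mulr0.
by rewrite add0r.
Qed.

Lemma LCD_tridiag_kernel (a b : F) :
  is_LCD (genC n a b) <-> (forall u : 'rV[F]_n, u *m tridiagT n (a + 1) b = 0 -> u = 0).
Proof.
split=> [LCD u uT0 | ker0 v /submxP [u ->]].
  have : u *m genC n a b = 0.
    by apply: LCD; rewrite ?submxMl // -mulmxA genC_gram mulmxA uT0 mul0mx.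
  by rewrite /genC mul_mx_row mulmx1 => /eqP; rewrite row_mx_eq0 => /andP [/eqP].
by rewrite -mulmxA genC_gram mulmxA => /ker0 /ker0 ->; rewrite mul0mx.
Qed.

End LCDCriterion.

Lemma LCD_iff_chebU (F : fieldType) (n : nat) (a b : F) :
  (2%:R : F) = 0 -> b != 0 ->
  is_LCD (genC n.+1 a b) <-> chebU ((a + 1) / b) n.+2 != 0.
Proof.
move=> two0 b0; have singular := @tridiagT_singular F n two0 (a + 1) b b0.
rewrite LCD_tridiag_kernel //; split=> [ker0 | U_neq0 u uT0].
  by apply/eqP => /singular [u /eqP u_neq0 /ker0].
by apply/eqP; apply: contraNT U_neq0 => u_neq0; apply/eqP/singular; exists u.
Qed.

Section RootsOfUnity.
Variable L : fieldType.
Hypothesis two0 : (2%:R : L) = 0.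

Lemma chebU_trig (t : L) j : t != 0 ->
  (t + t^-1) * chebU (t + t^-1) j = t ^+ j + t ^- j.
Proof.
move=> t0; elim/nat_ind2: j => [|| j IH1 IH2].
- by rewrite /= mulr0 expr0 invr1 -mulr2n -mulr_natr mul1r two0.
- by rewrite /= mulr1 expr1.
have -> : chebU (t + t^-1) j.+2 =
    (t + t^-1) * chebU (t + t^-1) j.+1 + chebU (t + t^-1) j by [].
rewrite mulrDr mulrCA IH1 IH2 !exprS.
set X := t ^+ j; have X0 : X != 0 by rewrite expf_neq0.
have -> : (t + t^-1) * (t * X + (t * X)^-1) + (X + X^-1) =
    t * (t * X) + (t * (t * X))^-1 + 2%:R * (X + X^-1).
  by field; rewrite t0 X0.
by rewrite two0 mul0r addr0.
Qed.

Variables (k : nat) (theta : L).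
Hypothesis prim : (k.*2.+1).-primitive_root theta.

Let root_val (i : nat) : L := theta ^+ i + theta ^- i.

Lemma theta_neq0 : theta != 0.
Proof.
apply/eqP => t0; have := prim_expr_order prim; rewrite t0 expr0n /=.
by move/eqP; rewrite eq_sym oner_eq0.
Qed.

Lemma root_val_inj i j : (i <= k)%N -> (j <= k)%N -> root_val i = root_val j -> i = j.
Proof.
move=> ik jk E.
have ti0 : theta ^+ i != 0 by rewrite expf_neq0 // theta_neq0.
have tj0 : theta ^+ j != 0 by rewrite expf_neq0 // theta_neq0.
have : (theta ^+ i - theta ^+ j) * (1 - (theta ^+ i * theta ^+ j)^-1) = 0.
  rewrite -[RHS](subrr (root_val i)) {2}E /root_val.
  by field; rewrite ti0 tj0.
move/eqP; rewrite mulf_eq0 => /orP [].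
  by rewrite subr_eq0 (eq_prim_root_expr prim) !modn_small; [move/eqP | lia | lia].
rewrite subr_eq0 eq_sym invr_eq1 -exprD -(expr0 theta) (eq_prim_root_expr prim).
by rewrite mod0n modn_small; lia.
Qed.

Lemma root_val_root i : (1 <= i <= k)%N ->
  chebU (root_val i) k.+1 + chebU (root_val i) k = 0.
Proof.
move=> /andP [i1 ik].
have ti0 : theta ^+ i != 0 by rewrite expf_neq0 // theta_neq0.
have val_neq0 : root_val i != 0.
  apply: contra_neq (lt0n_neq0 i1) => E; apply: root_val_inj => //.
  by rewrite E /root_val expr0 invr1 -mulr2n -mulr_natr mul1r two0.
have := @chebU_trig _ k.*2.+1 ti0.
rewrite -exprM mulnC exprM (prim_expr_order prim) expr1n invr1.
rewrite -mulr2n -mulr_natr mul1r two0 chebU_odd // => /eqP.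
by rewrite mulf_eq0 (negbTE val_neq0) expf_eq0 /= => /eqP.
Qed.

(* U_(2k+1)(z) = 0 exactly at the k values theta^i + theta^-i, 1 <= i <= k:
   they are k distinct roots of the degree-k polynomial U_(k+1) + U_k,
   and U_(2k+1) is its square. *)
Lemma chebU_odd_neq0 z :
  chebU z (k.*2.+1) != 0 <-> (forall i, (1 <= i <= k)%N -> z != root_val i).
Proof.
rewrite chebU_odd // expf_eq0 /=; split=> [U_neq0 i ik | not_root].
  by apply: contraNneq U_neq0 => ->; rewrite root_val_root.
apply/negP => /eqP Uz0.
pose p : {poly L} := chebU 'X k.+1 + chebU 'X k.
have size_p : size p = k.+1 by rewrite size_addl !size_chebU.
have p_neq0 : p != 0 by rewrite -size_poly_eq0 size_p.
have p_roots : all (root p) (z :: map root_val (iota 1 k)).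
  apply/allP => x; rewrite inE => /predU1P [-> | /mapP [i]].
    by rewrite /root hornerD !chebU_horner Uz0.
  rewrite mem_iota => i_range ->; rewrite /root hornerD !chebU_horner.
  by rewrite root_val_root //; apply/andP; split; lia.
have roots_uniq : uniq (z :: map root_val (iota 1 k)).
  rewrite /= map_inj_in_uniq ?iota_uniq ?andbT.
    apply/mapP => [[i]]; rewrite mem_iota => i_range.
    by apply/eqP/not_root; apply/andP; split; lia.
  by move=> i j; rewrite !mem_iota => ir jr; apply: root_val_inj; lia.
have := max_poly_roots p_neq0 p_roots roots_uniq.
by rewrite size_p /= size_map size_iota ltnn.
Qed.

End RootsOfUnity.

Lemma odd_part_even n r m :
  n.+1 = (2 ^ r * m.+1)%N -> ~~ (2 ^ r.+1 %| n.+1)%N -> ~~ odd m.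
Proof.
move=> hm; apply: contra => m_odd.
by rewrite hm expnS [(2 * _)%N]mulnC dvdn_pmul2l ?expn_gt0 // dvdn2 /= m_odd.
Qed.

Theorem theorem2p9 (F : finFieldType) (hchar : (2%N \in [pchar F])%N)
  (a b : F) (hb : b != 0) (n : nat) (hn : (2 <= n)%N)
  (r m : nat) (hr1 : (2 ^ r %| n.+1)%N) (hr2 : ~~ (2 ^ r.+1 %| n.+1)%N)
  (hm : n.+1 = (2 ^ r * m.+1)%N) (hr : (1 <= r)%N) :
  ~~ odd m /\
  ((0 < m)%N ->
     forall (L : fieldType) (f : {rmorphism F -> L}) (theta : L),
       (m.+1).-primitive_root theta ->
       (is_LCD (genC n a b) <->
          (f (a / b) != f (- 1 / b) /\
           forall i : nat, (1 <= i <= m./2)%N ->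
             f (a / b) != f (- 1 / b) + theta ^+ i + theta ^- i))) /\
  (m = 0%N -> (is_LCD (genC n a b) <-> a != 1)).
Proof.
have two0 : (2%:R : F) = 0 := pcharf0 hchar.
have m_even := @odd_part_even _ _ _ hm hr2.
split=> //; case: n hn hr1 hr2 hm => [|n] // _ _ _ hm.
have LCD_U := @LCD_iff_chebU F n a b two0 hb; rewrite hm in LCD_U.
split=> [_ L f theta prim | m0]; last first.
  (* m = 0: U_1 = 1, so the criterion reduces to (a + 1) / b != 0. *)
  rewrite LCD_U m0 chebU_pow2_neq0 // oner_neq0 andbT mulf_eq0 invr_eq0.
  by rewrite (negbTE hb) orbF addr_eq0 oppr_pchar2.
have two0L : (2%:R : L) = 0 by rewrite -(rmorph_nat f) two0 rmorph0.
have m_half : m = (m./2).*2 by rewrite -[LHS]odd_double_half (negbTE m_even).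
rewrite m_half in prim; rewrite LCD_U -(fmorph_eq0 f) chebU_rmorph.
rewrite chebU_pow2_neq0 // {1}m_half.
have shift w : (f ((a + 1) / b) != w) = (f (a / b) != f (- 1 / b) + w).
  by rewrite mulrDl rmorphD mulNr rmorphN [- _ + w]addrC -subr_eq opprK.
have roots_iff := @chebU_odd_neq0 L two0L _ _ prim (f ((a + 1) / b)).
rewrite shift addr0; split=> [/andP [-> /roots_iff roots] | [-> roots]].
  by split=> // i i_range; rewrite -addrA -shift roots.
by apply/roots_iff => i i_range; rewrite shift addrA roots.
Qed.
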